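(* Let $(B,\sqsubseteq)$ be an ordered functor with a cofree comonad, $\Sigma$ a functor with a free monad, and $\rho\colon\Sigma B^\infty\Rightarrow B\Sigma^*$ a monotone biGSOS specification. For a set $X$ and a coalgebra $c\colon X\to BX$, define $\varphi_c$ on the set of all functions $\Sigma^*X\to B\Sigma^*X$ by $$\varphi_c(f)=[\,B\mu_X\circ\rho_{\Sigma^*X}\circ\Sigma f^\infty,\ B\eta_X\circ c\,]\circ[\iota_X,\eta_X]^{-1}.$$ Then $\varphi_c$ is monotone with respect to the pointwise order induced by $\sqsubseteq_{B\Sigma^*X}$.
   Context: An ordered functor $(B,\sqsubseteq)$ is a functor $B\colon\mathsf{Set}\to\mathsf{Set}$ together with a preorder $\sqsubseteq_{BX}$ on $BX$ for every set $X$, such that $Bf$ is monotone for every function $f$. Relation lifting: for $R\subseteq X\times Y$ with projections $\pi_1,\pi_2$ and any functor $F$, $\mathsf{Rel}(F)(R)=\{(b,c)\in FX\times FY\mid\exists d\in FR.\ F\pi_1(d)=b,\ F\pi_2(d)=c\}$; $\mathsf{Rel}_{\sqsubseteq}(B)(R)=\{(b,c)\mid\exists b',c'.\ b\sqsubseteq b',\ (b',c')\in\mathsf{Rel}(B)(R),\ c'\sqsubseteq c\}$. For coalgebras $f\colon X\to BX$, $g\colon Y\to BY$, $R\subseteq X\times Y$ is a simulation if $(f(x),g(y))\in\mathsf{Rel}_{\sqsubseteq}(B)(R)$ for all $(x,y)\in R$; similarity is the greatest simulation. Cofree comonad: for each set $X$, $\theta_X\colon B^\infty X\to BB^\infty X$,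 $\epsilon_X\colon B^\infty X\to X$ with $\langle\theta_X,\epsilon_X\rangle$ a final $B(-)\times X$-coalgebra; for $f\colon X\to BX$, $f^\infty\colon X\to B^\infty X$ is the unique coalgebra morphism from $\langle f,\mathrm{id}_X\rangle$ to $\langle\theta_X,\epsilon_X\rangle$. The functor $B(-)\times X$ is ordered by $(b,x)\,\widetilde\sqsubseteq\,(c,y)$ iff $b\sqsubseteq c$ and $x=y$; $\lesssim_{B^\infty X}$ is the similarity of $\langle\theta_X,\epsilon_X\rangle$ with itself w.r.t. this order. Free monad: for each set $X$, $\iota_X\colon\Sigma\Sigma^*X\to\Sigma^*X$, $\eta_X\colon X\to\Sigma^*X$ with $[\iota_X,\eta_X]$ an initial algebra for $\Sigma(-)+X$ (in particular a bijection); $\mu_X\colon\Sigma^*\Sigma^*X\to\Sigma^*X$ is the unique map with $\mu_X\circ\eta_{\Sigma^*X}=\mathrm{id}$ and $\mu_X\circ\iota_{\Sigma^*X}=\iota_X\circ\Sigma\mu_X$. A biGSOS specification is a natural transformation $\rho\colon\Sigma B^\infty\Rightarrow B\Sigma^*$. It is monotone if for every set $X$ and all $u,v\in\Sigma B^\infty X$ with $(u,v)\in\mathsf{Rel}(\Sigma)(\lesssim_{B^\infty X})$ we have $\rho_X(u)\sqsubseteq_{B\Sigma^*X}\rho_X(v)$. *)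

(* functors Set -> Set are modelled as Type -> Type with a
   functorial action satisfying the functor laws. *)
From Stdlib Require Import Classical FunctionalExtensionality.
Set Implicit Arguments.

Record Functor := {
  Fob :> Type -> Type;
  fmap : forall X Y : Type, (X -> Y) -> Fob X -> Fob Y;
  fmap_id : forall X (x : Fob X), fmap (fun y : X => y) x = x;
  fmap_comp : forall X Y Z (f : X -> Y) (g : Y -> Z) (x : Fob X),
      fmap (fun y => g (f y)) x = fmap g (fmap f x)
}.
Arguments fmap f {X Y} _ _ : rename.

Record OrdFunctor (B : Functor) := {
  ole : forall X : Type, B X -> B X -> Prop;
  ole_refl : forall X (b : B X), ole X b b;
  ole_trans : forall X (a b c : B X), ole X a b -> ole X b c -> ole X a c;
  ole_mono : forall X Y (f : X -> Y) (b c : B X),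
      ole X b c -> ole Y (fmap B f b) (fmap B f c)
}.
Arguments ole {B} o {X} _ _.

(* Relation lifting Rel(F)(R): FR is F applied to the graph of R
   (a subset of X*Y), with projections pi1, pi2. *)
Definition RelGraph (X Y : Type) (R : X -> Y -> Prop) : Type :=
  { p : X * Y | R (fst p) (snd p) }.
Definition pi1 X Y (R : X -> Y -> Prop) (p : RelGraph R) : X := fst (proj1_sig p).
Definition pi2 X Y (R : X -> Y -> Prop) (p : RelGraph R) : Y := snd (proj1_sig p).

Definition RelLift (F : Type -> Type)
  (Fmap : forall A C : Type, (A -> C) -> F A -> F C)
  (X Y : Type) (R : X -> Y -> Prop) (b : F X) (c : F Y) : Prop :=
  exists d : F (RelGraph R), Fmap _ _ (@pi1 X Y R) d = b /\ Fmap _ _ (@pi2 X Y R) d = c.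

Definition RelLiftLe (F : Type -> Type)
  (Fmap : forall A C : Type, (A -> C) -> F A -> F C)
  (le : forall A : Type, F A -> F A -> Prop)
  (X Y : Type) (R : X -> Y -> Prop) (b : F X) (c : F Y) : Prop :=
  exists b' c', le _ b b' /\ RelLift F Fmap R b' c' /\ le _ c' c.

Definition simulation (F : Type -> Type)
  (Fmap : forall A C : Type, (A -> C) -> F A -> F C)
  (le : forall A : Type, F A -> F A -> Prop)
  (X Y : Type) (f : X -> F X) (g : Y -> F Y) (R : X -> Y -> Prop) : Prop :=
  forall x y, R x y -> RelLiftLe F Fmap le R (f x) (g y).

Definition similarity (F : Type -> Type)
  (Fmap : forall A C : Type, (A -> C) -> F A -> F C)
  (le : forall A : Type, F A -> F A -> Prop)
  (X Y : Type) (f : X -> F X) (g : Y -> F Y) (x : X) (y : Y) : Prop :=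
  exists R : X -> Y -> Prop, simulation F Fmap le f g R /\ R x y.

(* Cofree comonad: for each X, <theta_X, eps_X> is a final
   B(-) x X - coalgebra; unfold h k is the unique morphism from <h,k>. *)
Record Cofree (B : Functor) := {
  Binf : Type -> Type;
  theta : forall X, Binf X -> B (Binf X);
  eps : forall X, Binf X -> X;
  unfold : forall X Z : Type, (Z -> B Z) -> (Z -> X) -> Z -> Binf X;
  unfold_theta : forall X Z (h : Z -> B Z) (k : Z -> X) z,
      theta (unfold h k z) = fmap B (unfold h k) (h z);
  unfold_eps : forall X Z (h : Z -> B Z) (k : Z -> X) z,
      eps (unfold h k z) = k z;
  unfold_unique : forall X Z (h : Z -> B Z) (k : Z -> X) (m : Z -> Binf X),
      (forall z, theta (m z) = fmap B m (h z)) ->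
      (forall z, eps (m z) = k z) ->
      forall z, m z = unfold h k z
}.
Arguments theta {B} c {X} _.
Arguments eps {B} c {X} _.
Arguments unfold {B} c {X Z} _ _ _.

Definition BinfMap (B : Functor) (C : Cofree B) (X Y : Type) (f : X -> Y)
  : Binf C X -> Binf C Y :=
  unfold C (@theta B C X) (fun t => f (eps C t)).

Definition coinfty (B : Functor) (C : Cofree B) (X : Type) (f : X -> B X)
  : X -> Binf C X := unfold C f (fun x => x).

Definition BxX (B : Functor) (X : Type) (Z : Type) : Type := (B Z * X)%type.
Definition BxXmap (B : Functor) (X : Type) (A C : Type) (g : A -> C)
  (p : BxX B X A) : BxX B X C := (fmap B g (fst p), snd p).
Definition BxXle (B : Functor) (O : OrdFunctor B) (X : Type) (A : Type)
  (p q : BxX B X A) : Prop := ole O (fst p) (fst q) /\ snd p = snd q.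

Definition simInf (B : Functor) (O : OrdFunctor B) (C : Cofree B) (X : Type)
  : Binf C X -> Binf C X -> Prop :=
  similarity (BxX B X) (@BxXmap B X) (@BxXle B O X)
    (fun t : Binf C X => (theta C t, eps C t))
    (fun t : Binf C X => (theta C t, eps C t)).

(* Free monad: [iota_X, eta_X] is an initial Sigma(-) + X - algebra;
   fold a b is the unique algebra morphism to [a, b]. *)
Record Free (S : Functor) := {
  Sstar : Type -> Type;
  iota : forall X, S (Sstar X) -> Sstar X;
  eta : forall X, X -> Sstar X;
  fold : forall X Z : Type, (S Z -> Z) -> (X -> Z) -> Sstar X -> Z;
  fold_iota : forall X Z (a : S Z -> Z) (b : X -> Z) s,
      fold a b (iota X s) = a (fmap S (fold a b) s);
  fold_eta : forall X Z (a : S Z -> Z) (b : X -> Z) x,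
      fold a b (eta x) = b x;
  fold_unique : forall X Z (a : S Z -> Z) (b : X -> Z) (m : Sstar X -> Z),
      (forall s, m (iota X s) = a (fmap S m s)) ->
      (forall x, m (eta x) = b x) ->
      forall t, m t = fold a b t
}.
Arguments iota {S} f {X} _.
Arguments eta {S} f {X} _.
Arguments fold {S} f {X Z} _ _ _.

Definition SstarMap (S : Functor) (F : Free S) (X Y : Type) (f : X -> Y)
  : Sstar F X -> Sstar F Y :=
  fold F (@iota S F Y) (fun x => eta F (f x)).

Definition mu (S : Functor) (F : Free S) (X : Type)
  : Sstar F (Sstar F X) -> Sstar F X :=
  fold F (@iota S F X) (fun t => t).

Definition iotaeta (S : Functor) (F : Free S) (X : Type)
  (u : S (Sstar F X) + X) : Sstar F X :=
  match u with inl s => iota F s | inr x => eta F x end.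

(* Its inverse [iota_X, eta_X]^{-1} (Lambek's lemma: the fold of
   Sigma[iota,eta] + X). *)
Definition iotaeta_inv (S : Functor) (F : Free S) (X : Type)
  : Sstar F X -> (S (Sstar F X) + X)%type :=
  fold F (fun s => inl (fmap S (@iotaeta S F X) s)) (fun x => inr x).

Definition natural_biGSOS (B S : Functor) (C : Cofree B) (F : Free S)
  (rho : forall X, S (Binf C X) -> B (Sstar F X)) : Prop :=
  forall X Y (f : X -> Y) (u : S (Binf C X)),
    rho Y (fmap S (BinfMap C f) u) = fmap B (SstarMap F f) (rho X u).

Definition monotone_biGSOS (B S : Functor) (O : OrdFunctor B) (C : Cofree B)
  (F : Free S) (rho : forall X, S (Binf C X) -> B (Sstar F X)) : Prop :=
  forall X (u v : S (Binf C X)),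
    RelLift S (@fmap S) (simInf O C X) u v -> ole O (rho X u) (rho X v).

Definition phi (B S : Functor) (C : Cofree B) (F : Free S)
  (rho : forall X, S (Binf C X) -> B (Sstar F X)) (X : Type)
  (c : X -> B X) (f : Sstar F X -> B (Sstar F X)) (t : Sstar F X)
  : B (Sstar F X) :=
  match iotaeta_inv F X t with
  | inl s => fmap B (mu F X) (rho (Sstar F X) (fmap S (coinfty C f) s))
  | inr x => fmap B (@eta S F X) (c x)
  end.


(* The first component of phi_c f only sees f through f^infty, so it suffices that
   f <= g pointwise makes f^infty y and g^infty y similar; monotonicity of rho and
   of B mu then finish the inductive case, while the base case does not involve f. *)

Lemma RelLift_fmap (F : Functor) (Z X Y : Type) (R : X -> Y -> Prop)
  (a : Z -> X) (b : Z -> Y) (s : F Z) :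
  (forall z, R (a z) (b z)) -> RelLift F (@fmap F) R (fmap F a s) (fmap F b s).
Proof.
  intros Hab.
  pose (pair_ab := fun z => exist (fun p => R (fst p) (snd p)) (a z, b z) (Hab z)).
  exists (fmap F pair_ab s).
  rewrite <- !fmap_comp; split; reflexivity.
Qed.

Section CoinftyMonotone.

Variables (B : Functor) (O : OrdFunctor B) (C : Cofree B) (Y : Type).
Variables (f g : Y -> B Y).
Hypothesis le_fg : forall y, ole O (f y) (g y).

Definition coinfty_graph (t u : Binf C Y) : Prop :=
  exists y, t = coinfty C f y /\ u = coinfty C g y.

Lemma coinfty_graph_simulation :
  simulation (BxX B Y) (@BxXmap B Y) (@BxXle B O Y)
    (fun t : Binf C Y => (theta C t, eps C t))
    (fun t : Binf C Y => (theta C t, eps C t)) coinfty_graph.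
Proof.
  intros t u [y [-> ->]]; unfold coinfty; rewrite !unfold_theta, !unfold_eps.
  assert (Hlift : RelLift B (@fmap B) coinfty_graph
      (fmap B (coinfty C f) (g y)) (fmap B (coinfty C g) (g y))).
  { apply RelLift_fmap; intro z; exists z; split; reflexivity. }
  destruct Hlift as [d [d1 d2]].
  (* Enlarge f y to g y on the left; both sides then unfold the same step g y. *)
  exists (fmap B (coinfty C f) (g y), y), (fmap B (coinfty C g) (g y), y).
  split; [| split].
  - split; [apply ole_mono, le_fg | reflexivity].
  - exists (d, y); unfold BxXmap; simpl; rewrite d1, d2; split; reflexivity.
  - split; [apply ole_refl | reflexivity].
Qed.

Lemma simInf_coinfty (y : Y) : simInf O C Y (coinfty C f y) (coinfty C g y).
Proof.
  exists coinfty_graph; split.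
  - exact coinfty_graph_simulation.
  - exists y; split; reflexivity.
Qed.

End CoinftyMonotone.

Theorem mainTheorem7 (B : Functor) (O : OrdFunctor B) (C : Cofree B)
  (S : Functor) (F : Free S)
  (rho : forall X, S (Binf C X) -> B (Sstar F X))
  (Hnat : natural_biGSOS C F rho)
  (Hmono : monotone_biGSOS O C F rho)
  (X : Type) (c : X -> B X) :
  forall f g : Sstar F X -> B (Sstar F X),
    (forall t, ole O (f t) (g t)) ->
    forall t, ole O (phi C F rho c f t) (phi C F rho c g t).
Proof.
  intros f g le_fg t; unfold phi.
  destruct (iotaeta_inv F X t) as [s | x].
  - apply ole_mono, Hmono, RelLift_fmap.
    intro z; apply simInf_coinfty, le_fg.
  - apply ole_refl.
Qed.
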